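(* Let $y_t=\theta_t+Z_t$, $t=1,\dots,n$, where $Z_t$ are independent zero-mean $\sigma$-subgaussian random variables, let $\theta_0=y_0=0$, and let $\delta\in(0,1]$. For $1\le t_h\le t\le n$ define the online-averaging prediction $x_t^{t_h}=y_{t_h-1}$ if $t=t_h$ and $x_t^{t_h}=\bar y_{t_h:t-1}$ if $t>t_h$. Then with probability at least $1-\frac{\delta}{2}$, simultaneously for all $1\le t_h\le t_l\le n$, $$\sum_{t=t_h}^{t_l}(x_t^{t_h}-\theta_t)^2\le 4\sigma^2\log(4n^3/\delta)\big(2+\log(t_l-t_h+1)\big)+2(\theta_{t_h-1}-\theta_{t_h})^2+2\sum_{t=t_h+1}^{t_l}(\bar\theta_{t_h:t-1}-\theta_t)^2.$$
   Context: $\bar y_{a:b}$ and $\bar\theta_{a:b}$ denote the averages of $y_a,\dots,y_b$ and $\theta_a,\dots,\theta_b$ respectively. Logarithms are natural. *)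

From HB Require Import structures.
From mathcomp Require Import all_boot all_order all_algebra.
From mathcomp Require Import all_classical all_reals all_analysis.
Set Implicit Arguments. Unset Strict Implicit. Unset Printing Implicit Defensive.
Import Order.TTheory GRing.Theory Num.Theory.
Import numFieldNormedType.Exports.
Local Open Scope classical_set_scope.
Local Open Scope ring_scope.

Definition mutually_independent {d} {T : measurableType d} {R : realType}
  (P : probability T R) (n : nat) (Z : nat -> T -> R) : Prop :=
  forall (I : seq nat) (B : nat -> set R),
    uniq I -> all (fun i => (1 <= i <= n)%N) I ->
    (forall i, measurable (B i)) ->
    P (\bigcap_(i in [set` I]) (Z i @^-1` B i)) =
    (\prod_(i <- I) P (Z i @^-1` B i))%E.

Definition subgaussian {d} {T : measurableType d} {R : realType}
  (P : probability T R) (sigma : R) (X : T -> R) : Prop :=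
  forall l : R, (\int[P]_(w in setT) (expR (l * X w))%:E <=
                 (expR (l ^+ 2 * sigma ^+ 2 / 2))%:E)%E.

Definition avg {R : realType} (f : nat -> R) (a b : nat) : R :=
  (\sum_(a <= i < b.+1) f i) / (b.+1 - a)%:R.

Definition online_pred {R : realType} (y : nat -> R) (th t : nat) : R :=
  if t == th then y th.-1 else avg y th t.-1.

From HB Require Import structures.
From mathcomp Require Import all_boot all_order all_algebra.
From mathcomp Require Import all_classical all_reals all_analysis.
From mathcomp Require Import ring lra zify.
From mathcomp Require Import measurable_realfun measurable_fun_approximation.
Import Order.TTheory GRing.Theory Num.Theory.
Import numFieldNormedType.Exports.
Local Open Scope classical_set_scope.
Local Open Scope ring_scope.

(* Independence and subgaussianity give E[exp(lam sum_(i in I) Z_i)] <=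
   exp(lam^2 sigma^2 |I| / 2), so by Chernoff's bound every window sum satisfies
   (Z_a + ... + Z_b)^2 <= 2 (b - a + 1) sigma^2 L, with L = log(4 n^3 / delta),
   outside an event of probability 2 exp(-L) = delta / (2 n^3); a union bound
   over the n^2 windows leaves probability at most delta / 2.  Outside the bad
   event the bound is deterministic: for t > t_h the prediction is the average of
   theta plus the average noise over t - t_h indices, (a + b)^2 <= 2 a^2 + 2 b^2
   turns the latter into 4 sigma^2 L / (t - t_h), and the harmonic sum of these
   is at most 1 + log(t_l - t_h + 1). *)

Lemma sqrrD_le {R : realDomainType} (a b : R) :
  (a + b) ^+ 2 <= 2 * a ^+ 2 + 2 * b ^+ 2.
Proof. by have := sqr_ge0 (a - b); nra. Qed.

Lemma harmonic_le_1Dln {R : realType} (j : nat) :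
  \sum_(0 <= k < j) (k.+1%:R : R)^-1 <= 1 + ln j.+1%:R.
Proof.
have ln_step m : ln m.+1%:R + (m.+2%:R : R)^-1 <= ln m.+2%:R.
  have inv_lt1 : (m.+2%:R : R)^-1 < 1 by rewrite invf_lt1 // ltr1n.
  have := @le_ln1Dx R (- m.+2%:R^-1); rewrite ltrN2 => /(_ inv_lt1).
  have -> : 1 - m.+2%:R^-1 = m.+1%:R / m.+2%:R :> R.
    by rewrite -[m.+2]addn1 natrD; field; rewrite gt_eqF // -natrD addn1.
  rewrite lnM ?posrE ?invr_gt0 // lnV ?posrE // lerBlDr => ln_le.
  by rewrite -lerBrDr addrC.
suff strong : \sum_(0 <= k < j.+1) (k.+1%:R : R)^-1 <= 1 + ln j.+1%:R.
  by apply: le_trans strong; rewrite big_nat_recr //= lerDl.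
elim: j => [|j IH]; first by rewrite big_nat1 ln1 addr0 invr1.
rewrite big_nat_recr //=; apply: le_trans (lerD IH (lexx _)) _.
by rewrite -addrA lerD2l.
Qed.

Definition noisy {R : realType} (theta z : nat -> R) (t : nat) : R :=
  if t == 0%N then 0 else theta t + z t.

Definition window_sums_bounded {R : realType} (z : nat -> R) (c : R) (n : nat) :=
  forall a b, (1 <= a)%N -> (a <= b)%N -> (b <= n)%N ->
    (\sum_(a <= i < b.+1) z i) ^+ 2 <= 2 * (b.+1 - a)%:R * c.

Section online_averaging.
Context {R : realType} {theta z : nat -> R} {c : R} {n : nat}.
Hypotheses (theta0 : theta 0%N = 0) (c_ge0 : 0 <= c)
  (z_bounded : window_sums_bounded z c n).

Lemma online_pred_first_sq_err th : (1 <= th <= n)%N ->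
  (online_pred (noisy theta z) th th - theta th) ^+ 2 <=
    2 * (theta th.-1 - theta th) ^+ 2 + 4 * c.
Proof.
case/andP=> th_ge1 th_le_n; rewrite /online_pred eqxx /noisy.
have [->|th1_neq0] := eqVneq th.-1 0%N.
  by rewrite theta0; have := c_ge0; have := sqr_ge0 (0 - theta th); lra.
have := z_bounded th.-1 th.-1; rewrite big_nat1 subSnn lt0n th1_neq0 leqnn.
move=> /(_ isT isT (leq_trans (leq_pred _) th_le_n)) z_le.
have := sqrrD_le (theta th.-1 - theta th) (z th.-1).
by rewrite addrAC; have := c_ge0; lra.
Qed.

Lemma avg_noisy th t : (1 <= th)%N -> (th < t)%N ->
  avg (noisy theta z) th t.-1 =
  avg theta th t.-1 + (\sum_(th <= i < t) z i) / (t - th)%:R.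
Proof.
move=> th_ge1 th_lt_t; have t_gt0 : (0 < t)%N by apply: leq_trans th_lt_t.
rewrite /avg prednK // -mulrDl -big_split /=; congr (_ / _).
apply: eq_big_nat => i /andP[th_le_i _]; rewrite /noisy ifF //.
by apply/negbTE; rewrite -lt0n (leq_trans th_ge1 th_le_i).
Qed.

Lemma online_pred_later_sq_err th t : (1 <= th)%N -> (th < t <= n)%N ->
  (online_pred (noisy theta z) th t - theta t) ^+ 2 <=
    2 * (avg theta th t.-1 - theta t) ^+ 2 + 4 * c / (t - th)%:R.
Proof.
move=> th_ge1 /andP[th_lt_t t_le_n]; have t_gt0 : (0 < t)%N by apply: leq_trans th_lt_t.
rewrite /online_pred gtn_eqF // avg_noisy //.
have := z_bounded th t.-1 th_ge1; rewrite prednK // -ltnS prednK //.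
move=> /(_ th_lt_t (leq_trans (leq_pred _) t_le_n)).
set S := \sum_(th <= i < t) z i; set k := (t - th)%:R => S_le.
have k_gt0 : 0 < k by rewrite ltr0n subn_gt0.
have mean_noise_le : (S / k) ^+ 2 <= 2 * c / k.
  rewrite expr_div_n ler_pdivrMr ?exprn_gt0 //.
  by rewrite (_ : 2 * c / k * k ^+ 2 = 2 * k * c) //; field; rewrite gt_eqF.
have := sqrrD_le (avg theta th t.-1 - theta t) (S / k).
by rewrite addrAC; lra.
Qed.

Lemma online_pred_sq_err_sum th tl : (1 <= th)%N -> (th <= tl <= n)%N ->
  \sum_(th <= t < tl.+1) (online_pred (noisy theta z) th t - theta t) ^+ 2 <=
  4 * c * (2 + ln (tl - th + 1)%:R) + 2 * (theta th.-1 - theta th) ^+ 2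
    + 2 * \sum_(th.+1 <= t < tl.+1) (avg theta th t.-1 - theta t) ^+ 2.
Proof.
move=> th_ge1 /andP[th_le_tl tl_le_n].
rewrite big_ltn ?ltnS //.
have first_term : (online_pred (noisy theta z) th th - theta th) ^+ 2 <=
    2 * (theta th.-1 - theta th) ^+ 2 + 4 * c.
  by apply: online_pred_first_sq_err; rewrite th_ge1 (leq_trans th_le_tl tl_le_n).
have later_terms : \sum_(th.+1 <= t < tl.+1) (online_pred (noisy theta z) th t - theta t) ^+ 2
    <= \sum_(th.+1 <= t < tl.+1)
         (2 * (avg theta th t.-1 - theta t) ^+ 2 + 4 * c / (t - th)%:R).
  apply: ler_sum_nat => t /andP[th_lt_t]; rewrite ltnS => t_le_tl.
  by apply: online_pred_later_sq_err; rewrite // th_lt_t (leq_trans t_le_tl tl_le_n).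
apply: le_trans (lerD first_term later_terms) _.
rewrite big_split /= -!mulr_sumr.
have harmonic : \sum_(th.+1 <= t < tl.+1) ((t - th)%:R : R)^-1 <= 1 + ln (tl - th + 1)%:R.
  rewrite -{1}(add0n th.+1) big_addn subSS addn1.
  rewrite (eq_bigr (fun i => (i.+1%:R : R)^-1)); last first.
    by move=> i _; rewrite addnS -addSn addnK.
  exact: harmonic_le_1Dln.
have four_c_ge0 : 0 <= 4 * c by rewrite mulr_ge0.
by have := ler_wpM2l four_c_ge0 harmonic; lra.
Qed.

End online_averaging.

Lemma prod_indic_bigcap {T U : Type} {R : realType} (J : seq nat) (X : nat -> T -> U)
    (B : nat -> set U) (w : T) :
  \prod_(j <- J) \1_(B j) (X j w) = \1_(\bigcap_(j in [set` J]) (X j @^-1` B j)) w :> R.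
Proof.
have [inB|notinB] := pselect ((\bigcap_(j in [set` J]) (X j @^-1` B j)) w).
  rewrite indicE mem_set // big1_seq // => j /andP[_ jJ].
  by rewrite indicE mem_set //; apply: inB.
rewrite indicE memNset //.
have [j jJ notBj] : exists2 j, j \in J & ~ B j (X j w).
  apply: contrapT => allB; apply: notinB => j jJ /=.
  by apply: contrapT => notBj; apply: allB; exists j.
by rewrite (big_rem j) //= indicE memNset // mul0r.
Qed.

Definition simple_comb {R : realType} (K : seq nat) (c : nat -> R) (C : nat -> set R)
    (x : R) : R :=
  \sum_(k <- K) c k * \1_(C k) x.

Lemma simple_comb_ge0 {R : realType} K (c : nat -> R) C x :
  (forall k, 0 <= c k) -> 0 <= simple_comb K c C x.
Proof. by move=> c_ge0; apply: sumr_ge0 => k _; apply: mulr_ge0. Qed.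

Lemma measurable_simple_comb {R : realType} K (c : nat -> R) C :
  (forall k, measurable (C k)) -> measurable_fun setT (simple_comb K c C).
Proof.
move=> mC; apply: measurable_sum => k; apply: measurable_funM.
  exact: measurable_cst.
exact: measurable_indic.
Qed.

Definition approx_coef {R : realType} (m k : nat) : R :=
  if (k < m * 2 ^ m)%N then k%:R * 2 ^- m else m%:R.

Definition approx_set {R : realType} (g : R -> \bar R) (m k : nat) : set R :=
  if (k < m * 2 ^ m)%N then dyadic_approx setT g m k else integer_approx setT g m.

Lemma approx_coef_ge0 {R : realType} m k : 0 <= approx_coef m k :> R.
Proof. by rewrite /approx_coef; case: ifP. Qed.

Lemma measurable_approx_set {R : realType} (g : R -> \bar R) m k :
  measurable_fun setT g -> measurable (approx_set g m k).
Proof.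
move=> mg; rewrite /approx_set; case: ifP => _.
  rewrite /dyadic_approx; case: ifPn => _ //; rewrite -preimage_comp.
  by apply: mg => //; apply/measurable_image_EFin; exact: measurable_itv.
rewrite /integer_approx.
rewrite (_ : [set x | _] = g @^-1` [set` Interval (BLeft (m%:R%:E)) +oo%O]).
  by apply: mg => //; exact: emeasurable_itv.
by apply/seteqP; split => x /=; rewrite in_itv /= andbT.
Qed.

Lemma approx_simple_comb {R : realType} (g : R -> \bar R) m x :
  approx setT g m x =
  simple_comb (index_iota 0 (m * 2 ^ m).+1) (approx_coef m) (approx_set g m) x.
Proof.
rewrite /simple_comb big_nat_recr //= /approx_coef /approx_set ltnn.
congr (_ + _); rewrite big_mkord; apply: eq_bigr => k _.
by rewrite ltn_ord.
Qed.

Lemma measurable_set_le {d} {T : measurableType d} {R : realType} (f g : T -> R) :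
  measurable_fun setT f -> measurable_fun setT g -> measurable [set w | f w <= g w].
Proof. by move=> mf mg; rewrite -[X in measurable X]setTI; exact: measurable_fun_le. Qed.

Lemma measurable_set_lt {d} {T : measurableType d} {R : realType} (f g : T -> R) :
  measurable_fun setT f -> measurable_fun setT g -> measurable [set w | f w < g w].
Proof.
move=> mf mg; rewrite (_ : [set w | _] = ~` [set w | g w <= f w]).
  by apply: measurableC; exact: measurable_set_le.
by apply/seteqP; split => w /=; rewrite ltNge => /negP.
Qed.

Lemma measurable_imply {d} {T : measurableType d} (Q : Prop) (A : set T) :
  measurable A -> measurable [set w | Q -> A w].
Proof.
move=> mA; have [q|nq] := pselect Q.
  by rewrite (_ : [set w | _] = A) //; apply/seteqP; split => w /=; [apply | move=> ? _].
by rewrite (_ : [set w | _] = setT) //; apply/seteqP; split => w //= _ /nq.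
Qed.

Lemma measurable_forall_nat {d} {T : measurableType d} (A : nat -> set T) :
  (forall k, measurable (A k)) -> measurable [set w | forall k, A k w].
Proof.
move=> mA; rewrite (_ : [set w | _] = \bigcap_k A k); first exact: bigcapT_measurable.
by apply/seteqP; split => w /= Aw k //; exact: Aw.
Qed.

Lemma measure_bigsetU_ord_le {d} {T : measurableType d} {R : realType}
    {mu : {measure set T -> \bar R}} (n : nat) (A : nat -> set T) (p : R) :
  (forall i, (i < n)%N -> measurable (A i)) ->
  (forall i, (i < n)%N -> (mu (A i) <= p%:E)%E) ->
  (mu (\big[setU/set0]_(i < n) A i) <= (n%:R * p)%:E)%E.
Proof.
move=> mA muA; apply: le_trans (Boole_inequality mu mA) _.
apply: le_trans (_ : (\sum_(i < n) p%:E <= _)%E).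
  by apply: lee_sum => i _; exact: muA.
by rewrite sumEFin lee_fin sumr_const card_ord mulr_natl.
Qed.

Lemma markov_expR {d} {T : measurableType d} {R : realType}
    (mu : {measure set T -> \bar R}) (S : T -> R) (lam a : R) :
  measurable_fun setT S ->
  (mu [set w | (a <= lam * S w)%R] * (expR a)%:E <=
    \int[mu]_(w in setT) (expR (lam * S w))%:E)%E.
Proof.
move=> mS; have mlamS : measurable_fun setT (fun w => lam * S w).
  by apply: measurable_funM => //; exact: measurable_cst.
have mA : measurable [set w | a <= lam * S w].
  by apply: measurable_set_le => //; exact: measurable_cst.
rewrite muleC (_ : mu _ =
    \int[mu]_(w in setT) (\1_[set w | (a <= lam * S w)%R] w)%:E)%E; last first.
  by rewrite integral_indic // setIT.
rewrite -ge0_integralZl_EFin //; last first.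
  exact/measurable_EFinP/measurable_indic.
apply: ge0_le_integral => //.
- by apply: measurable_funeM; exact/measurable_EFinP/measurable_indic.
- exact/measurable_EFinP/measurableT_comp.
move=> w _; rewrite lee_fin indicE.
have [aS|aS] := pselect (a <= lam * S w).
  by rewrite mem_set // mulr1 ler_expR.
by rewrite memNset // mulr0 expR_ge0.
Qed.

Section independent_sums.
Context {d} {T : measurableType d} {R : realType} (P : probability T R).
Context {n : nat} {Z : nat -> T -> R}.
Hypotheses (mZ : forall t, measurable_fun setT (Z t))
  (HZ : mutually_independent P n Z).

Let pr (i : nat) (A : set R) : R := fine (P (Z i @^-1` A)).

Let measurable_preimage i A : measurable A -> measurable (Z i @^-1` A).
Proof. by move=> mA; rewrite -[_ @^-1` _]setTI; apply: mZ. Qed.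

Lemma integral_prod_indic (J : seq nat) (B : nat -> set R) :
  uniq J -> all (fun i => (1 <= i <= n)%N) J -> (forall j, measurable (B j)) ->
  (\int[P]_(w in setT) (\prod_(j <- J) \1_(B j) (Z j w))%:E =
   (\prod_(j <- J) pr j (B j))%:E)%E.
Proof.
move=> uJ J1n mB; under eq_integral do rewrite prod_indic_bigcap.
rewrite integral_indic //; last first.
  by apply: bigcap_measurableType => j _; exact: measurable_preimage.
rewrite setIT; apply: eq_trans (HZ _ _ uJ J1n mB) _.
rewrite -prodEFin; apply: eq_bigr => j _.
by rewrite fineK // fin_num_measure //; exact: measurable_preimage.
Qed.

Section simple_factors.
Variables (K : seq nat) (c : nat -> R) (C : nat -> set R).
Hypotheses (c_ge0 : forall k, 0 <= c k) (mC : forall k, measurable (C k)).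

Let mixed_prod (J I : seq nat) (B : nat -> set R) (w : T) : R :=
  (\prod_(j <- J) \1_(B j) (Z j w)) * \prod_(i <- I) simple_comb K c C (Z i w).

Let mixed_prod_ge0 J I B w : 0 <= mixed_prod J I B w.
Proof.
by apply: mulr_ge0; apply: prodr_ge0 => i _ //; exact: simple_comb_ge0.
Qed.

Let measurable_mixed_prod J I B :
  (forall j, measurable (B j)) -> measurable_fun setT (mixed_prod J I B).
Proof.
move=> mB; apply: measurable_funM; apply: measurable_prod => i _.
  by apply: measurableT_comp => //; exact: measurable_indic.
by apply: measurableT_comp => //; exact: measurable_simple_comb.
Qed.

(* Induction on I: the head simple factor is expanded, and each of its
   indicators joins the indicator factors indexed by J. *)
Lemma integral_mixed_prod I J (B : nat -> set R) :
  uniq (J ++ I) -> all (fun i => (1 <= i <= n)%N) (J ++ I) ->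
  (forall j, measurable (B j)) ->
  (\int[P]_(w in setT) (mixed_prod J I B w)%:E =
   ((\prod_(j <- J) pr j (B j)) *
      \prod_(i <- I) \sum_(k <- K) c k * pr i (C k))%:E)%E.
Proof.
elim: I J B => [|i0 I IH] J B uJI JI1n mB.
  rewrite cats0 in uJI JI1n; rewrite big_nil mulr1 -integral_prod_indic //.
  by apply: eq_integral => w _; rewrite /mixed_prod big_nil mulr1.
have i0J : i0 \notin J.
  by move: uJI; rewrite cat_uniq /= => /and4P[_ /norP[]].
pose B' k j := if j == i0 then C k else B j.
have mB' k j : measurable (B' k j) by rewrite /B'; case: eqP.
have B'E (F : nat -> set R -> R) k :
    \prod_(j <- J) F j (B' k j) = \prod_(j <- J) F j (B j).
  apply: eq_big_seq => j jJ; rewrite /B'; case: eqP => // ji0.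
  by rewrite -ji0 jJ in i0J.
have uJI' : uniq ((i0 :: J) ++ I).
  by rewrite -(perm_uniq (permEl (perm_catCA J [:: i0] I))).
have JI1n' : all (fun i => (1 <= i <= n)%N) ((i0 :: J) ++ I).
  by rewrite -(perm_all _ (permEl (perm_catCA J [:: i0] I))).
have expand w : mixed_prod J (i0 :: I) B w =
    \sum_(k <- K) c k * mixed_prod (i0 :: J) I (B' k) w.
  rewrite /mixed_prod big_cons mulrCA mulr_suml; apply: eq_bigr => k _.
  rewrite big_cons (B'E (fun j A => \1_A (Z j w))).
  by rewrite /B' eqxx; ring.
transitivity (\sum_(k <- K)
    \int[P]_(w in setT) ((c k)%:E * (mixed_prod (i0 :: J) I (B' k) w)%:E))%E.
  under eq_integral do rewrite expand -sumEFin.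
  apply: ge0_integral_sum => // [k|k w _].
    apply/measurable_EFinP; apply: measurable_funM.
      exact: measurable_cst.
    exact: measurable_mixed_prod.
  by rewrite lee_fin mulr_ge0.
transitivity (\sum_(k <- K) (c k * ((\prod_(j <- i0 :: J) pr j (B' k j)) *
    \prod_(i <- I) \sum_(k <- K) c k * pr i (C k)))%:E)%E.
  apply: eq_bigr => k _.
  have mk := @measurable_mixed_prod (i0 :: J) I (B' k) (mB' k).
  rewrite ge0_integralZl_EFin ?IH // => [w _|]; [by rewrite lee_fin | exact/measurable_EFinP].
rewrite sumEFin; congr (_%:E).
rewrite !big_cons mulrCA mulr_suml; apply: eq_bigr => k _.
by rewrite big_cons (B'E pr) /B' eqxx; ring.
Qed.

Lemma integral_prod_simple I :
  uniq I -> all (fun i => (1 <= i <= n)%N) I ->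
  (\int[P]_(w in setT) (\prod_(i <- I) simple_comb K c C (Z i w))%:E =
   (\prod_(i <- I) \sum_(k <- K) c k * pr i (C k))%:E)%E.
Proof.
move=> uI I1n.
have := integral_mixed_prod I [::] (fun=> set0) uI I1n (fun=> measurable0).
rewrite big_nil mul1r => <-.
by apply: eq_integral => w _; rewrite /mixed_prod big_nil mul1r.
Qed.

End simple_factors.

Section approximation.
Variable g : R -> R.
Hypotheses (mg : measurable_fun setT g) (g_ge0 : forall x, 0 <= g x).

Let G x := (g x)%:E.

Let mG : measurable_fun setT G.
Proof. exact/measurable_EFinP. Qed.

Let G_ge0 x : setT x -> (0 <= G x)%E.
Proof. by move=> _; rewrite lee_fin. Qed.

Let a m := approx setT G m.

Let a_ge0 m x : 0 <= a m x.
Proof.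
by rewrite /a approx_simple_comb; apply: simple_comb_ge0 => k; exact: approx_coef_ge0.
Qed.

Let measurable_a m : measurable_fun setT (a m).
Proof.
rewrite /a (funext (approx_simple_comb G m)).
by apply: measurable_simple_comb => k; exact: measurable_approx_set.
Qed.

Let approx_mean m i := \sum_(k <- index_iota 0 (m * 2 ^ m).+1)
  approx_coef m k * pr i (approx_set G m k).

Lemma integral_prod_approx m J : uniq J -> all (fun i => (1 <= i <= n)%N) J ->
  (\int[P]_(w in setT) (\prod_(i <- J) a m (Z i w))%:E =
   (\prod_(i <- J) approx_mean m i)%:E)%E.
Proof.
move=> uJ J1n; rewrite -integral_prod_simple //.
- by apply: eq_integral => w _; under eq_bigr do rewrite /a approx_simple_comb.
- exact: approx_coef_ge0.
- by move=> k; exact: measurable_approx_set.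
Qed.

Lemma approx_mean_le m i (b : R) : (1 <= i <= n)%N ->
  (\int[P]_(w in setT) (g (Z i w))%:E <= b%:E)%E -> 0 <= approx_mean m i <= b.
Proof.
move=> i1n gb; have := integral_prod_approx m [:: i] erefl.
rewrite /= i1n !big_seq1 => /(_ isT) int_i.
rewrite -!lee_fin -int_i; under eq_integral do rewrite big_seq1.
apply/andP; split; first by apply: integral_ge0 => w _; rewrite lee_fin.
apply: le_trans gb; apply: ge0_le_integral => //.
- by move=> w _; rewrite lee_fin.
- exact/measurable_EFinP/measurableT_comp.
- exact/measurable_EFinP/measurableT_comp.
- by move=> w _; exact: (le_approx m G_ge0 Logic.I).
Qed.

(* Approximate g from below by simple functions, for which independence gives
   the product formula, and pass to the limit by monotone convergence. *)
Lemma integral_prod_le (b : nat -> R) (I : seq nat) :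
  uniq I -> all (fun i => (1 <= i <= n)%N) I ->
  (forall i, i \in I -> (\int[P]_(w in setT) (g (Z i w))%:E <= (b i)%:E)%E) ->
  (\int[P]_(w in setT) (\prod_(i <- I) g (Z i w))%:E <= (\prod_(i <- I) b i)%:E)%E.
Proof.
move=> uI I1n gb.
pose F m w := (\prod_(i <- I) a m (Z i w))%:E.
have mF m : measurable_fun setT (F m).
  by apply/measurable_EFinP; apply: measurable_prod => i _; exact: measurableT_comp.
have F_ge0 m w : (0 <= F m w)%E by rewrite lee_fin; apply: prodr_ge0 => i _.
have F_nd w : {homo F^~ w : p q / (p <= q)%N >-> (p <= q)%E}.
  move=> p q pq; rewrite lee_fin; apply: ler_prod => i _; rewrite a_ge0 /=.
  by move: (nd_approx setT G pq) => /lefP; apply.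
have F_cvg w : F^~ w @ \oo --> (\prod_(i <- I) g (Z i w))%:E.
  apply: cvg_EFin; first exact: nearW.
  apply: cvg_big => [|i _]; first exact: mul_continuous.
  exact: (cvg_approx G_ge0 Logic.I (ltry _)).
rewrite (eq_integral (fun w => limn (F^~ w))); last first.
  by move=> w _; rewrite (cvg_lim _ (F_cvg w)).
rewrite (monotone_convergence P measurableT mF (fun m w _ => F_ge0 m w)
  (fun w _ => F_nd w)).
apply: lime_le.
  apply: ereal_nondecreasing_is_cvgn => p q pq.
  by apply: ge0_le_integral => // w _; exact: F_nd.
apply: nearW => m; rewrite integral_prod_approx // lee_fin.
rewrite big_seq [leRHS]big_seq; apply: ler_prod => i iI.
by apply: approx_mean_le; [move/allP: I1n; apply | exact: gb].
Qed.

End approximation.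

Section subgaussian_sums.
Context {sigma : R}.
Hypothesis SG : forall t, (1 <= t <= n)%N -> subgaussian P sigma (Z t).

Lemma subgaussian_sum_mgf_le (lam : R) (I : seq nat) :
  uniq I -> all (fun i => (1 <= i <= n)%N) I ->
  (\int[P]_(w in setT) (expR (lam * \sum_(i <- I) Z i w))%:E <=
    (expR (lam ^+ 2 * sigma ^+ 2 / 2) ^+ size I)%:E)%E.
Proof.
move=> uI I1n; under eq_integral do rewrite mulr_sumr expR_sum.
rewrite -iter_mulr_1 -count_predT -big_const_seq.
apply: (integral_prod_le (fun x => expR (lam * x))) => // [|i iI].
  apply: measurableT_comp; first exact: measurable_expR.
  by apply: measurable_funM => //; exact: measurable_cst.
by apply: SG; move/allP: I1n; apply.
Qed.

Section fixed_indices.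
Variable I : seq nat.
Hypotheses (uI : uniq I) (I1n : all (fun i => (1 <= i <= n)%N) I).

Let S w := \sum_(i <- I) Z i w.

Let mS : measurable_fun setT S.
Proof. exact: measurable_sum. Qed.

Lemma subgaussian_sum_chernoff (mu a : R) :
  (P [set w | (a <= mu * S w)%R] <=
    (expR (mu ^+ 2 * sigma ^+ 2 / 2 * (size I)%:R - a))%:E)%E.
Proof.
have := le_trans (markov_expR P S mu a mS) (subgaussian_sum_mgf_le mu I uI I1n).
rewrite -expRM_natr => tail_le.
apply: (@le_trans _ _ ((expR (mu ^+ 2 * sigma ^+ 2 / 2 * (size I)%:R))%:E *
    (expR a)^-1%:E)%E).
  by rewrite lee_pdivlMr ?expR_gt0.
by rewrite -EFinM -expRN -expRD.
Qed.

(* Chernoff's bound for S and - S with the parameter lam = 2 L / s. *)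
Lemma subgaussian_sum_tail (L s : R) : 0 < L -> 0 < s ->
  2 * (size I)%:R * sigma ^+ 2 * L <= s ^+ 2 ->
  (P [set w | (s ^+ 2 <= S w ^+ 2)%R] <= (2 * expR (- L))%:E)%E.
Proof.
move=> L_gt0 s_gt0 sL.
pose lam := 2 * L / s.
have lam_gt0 : 0 < lam by rewrite divr_gt0 // mulr_gt0.
have exponent_le : lam ^+ 2 * sigma ^+ 2 / 2 * (size I)%:R - lam * s <= - L.
  have -> : lam ^+ 2 * sigma ^+ 2 / 2 * (size I)%:R =
      L * (2 * (size I)%:R * sigma ^+ 2 * L) / s ^+ 2.
    by rewrite /lam; field; rewrite gt_eqF.
  have -> : lam * s = 2 * L by rewrite /lam; field; rewrite gt_eqF.
  suff : L * (2 * (size I)%:R * sigma ^+ 2 * L) / s ^+ 2 <= L by lra.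
  by rewrite ler_pdivrMr ?exprn_gt0 // ler_pM2l.
have mA mu : measurable [set w | (lam * s <= mu * S w)%R].
  apply: measurable_set_le; first exact: measurable_cst.
  by apply: measurable_funM => //; exact: measurable_cst.
have one_sided mu : mu ^+ 2 = lam ^+ 2 ->
    (P [set w | (lam * s <= mu * S w)%R] <= (expR (- L))%:E)%E.
  move=> mu2; apply: le_trans (subgaussian_sum_chernoff mu (lam * s)) _.
  by rewrite mu2 lee_fin ler_expR.
have cover : [set w | (s ^+ 2 <= S w ^+ 2)%R] `<=`
    [set w | (lam * s <= lam * S w)%R] `|` [set w | (lam * s <= - lam * S w)%R].
  move=> w /= sS; have [S_ge0|S_lt0] := leP 0 (S w).
    by left; rewrite ler_pM2l // -(@ler_pXn2r _ 2) // nnegrE ltW.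
  right; rewrite mulNr -mulrN ler_pM2l // -(@ler_pXn2r _ 2) ?nnegrE ?sqrrN //.
    exact: ltW.
  by rewrite oppr_ge0 ltW.
apply: le_trans (le_measure _ _ _ cover) _; rewrite ?inE.
- by apply: measurable_set_le; [exact: measurable_cst | exact: measurable_funX].
- exact: measurableU.
apply: le_trans (measureU2 _ (mA lam) (mA (- lam))) _.
rewrite (_ : 2 * expR (- L) = expR (- L) + expR (- L)); last by ring.
by rewrite EFinD; apply: leeD; apply: one_sided; rewrite ?sqrrN.
Qed.

Lemma subgaussian_sum_tail_strict (L c : R) : 0 < L -> 0 <= c ->
  2 * (size I)%:R * sigma ^+ 2 * L <= c ->
  (P [set w | (c < S w ^+ 2)%R] <= (2 * expR (- L))%:E)%E.
Proof.
move=> L_gt0 c_ge0 cL.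
pose F m := [set w | (c + m.+1%:R^-1 <= S w ^+ 2)%R].
have mF m : measurable (F m).
  by apply: measurable_set_le; [exact: measurable_cst | exact: measurable_funX].
have F_nd : {homo F : p q / (p <= q)%N >-> (p <= q)%O}.
  move=> p q pq; apply/subsetPset => w /=; apply: le_trans.
  by rewrite lerD2l lef_pV2 ?posrE ?ltr0n // ler_nat ltnS.
have -> : [set w | (c < S w ^+ 2)%R] = \bigcup_m F m.
  apply/seteqP; split => w /=.
    by move=> /ltr_add_invr [k ck]; exists k => //; exact: ltW.
  by move=> [m _]; apply: lt_le_trans; rewrite ltrDl invr_gt0.
have F_cvg := nondecreasing_cvg_mu (mu := P) mF (bigcupT_measurable _ mF) F_nd.
rewrite -(cvg_lim _ F_cvg) //; apply: lime_le; first exact: cvgP F_cvg.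
apply: nearW => m; have cm_gt0 : 0 < c + m.+1%:R^-1 by rewrite ltr_wpDl // invr_gt0.
have := subgaussian_sum_tail L (Num.sqrt (c + m.+1%:R^-1)) L_gt0.
rewrite sqrtr_gt0 sqr_sqrtr ?(ltW cm_gt0) // => /(_ cm_gt0); apply.
by apply: le_trans cL _; rewrite lerDl invr_ge0.
Qed.

End fixed_indices.

Lemma measurable_window_sums_bounded (c : R) :
  measurable [set w | window_sums_bounded (Z^~ w) c n].
Proof.
rewrite /window_sums_bounded.
apply: measurable_forall_nat => a; apply: measurable_forall_nat => b.
do 3 apply: measurable_imply.
apply: measurable_set_le; last exact: measurable_cst.
by apply: measurable_funX; exact: measurable_sum.
Qed.

Section union_bound.
Variable L : R.
Hypothesis L_gt0 : 0 < L.

Let window_excess a b := [set w | 2 * (b.+1 - a)%:R * (sigma ^+ 2 * L) <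
  (\sum_(a <= i < b.+1) Z i w) ^+ 2].

Let bad := \big[setU/set0]_(a < n) \big[setU/set0]_(b < n) window_excess a.+1 b.+1.

Let measurable_window_excess a b : measurable (window_excess a b).
Proof.
apply: measurable_set_lt; first exact: measurable_cst.
by apply: measurable_funX; exact: measurable_sum.
Qed.

Let measurable_bad : measurable bad.
Proof. by apply: bigsetU_measurable => a _; exact: bigsetU_measurable. Qed.

Let prob_bad_le : (P bad <= (n%:R ^+ 2 * (2 * expR (- L)))%:E)%E.
Proof.
rewrite expr2 -mulrA.
apply: (measure_bigsetU_ord_le n (fun a => \big[setU/set0]_(b < n) window_excess a.+1 b.+1))
  => a a_lt_n.
  by apply: bigsetU_measurable => b _.
apply: (measure_bigsetU_ord_le n (fun b => window_excess a.+1 b.+1)) => b b_lt_n //.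
apply: (subgaussian_sum_tail_strict _ (iota_uniq _ _)) => //.
- by apply/allP => i; rewrite mem_index_iota; lia.
- by apply: mulr_ge0; [exact: mulr_ge0 | exact: mulr_ge0 (sqr_ge0 _) (ltW L_gt0)].
- by rewrite size_iota !mulrA.
Qed.

Let not_bad_window_sums_bounded :
  ~` bad `<=` [set w | window_sums_bounded (Z^~ w) (sigma ^+ 2 * L) n].
Proof.
move=> w not_bad a b a_ge1 a_le_b b_le_n; have b_ge1 := leq_trans a_ge1 a_le_b.
rewrite leNgt; apply/negP => excess; apply: not_bad.
rewrite /bad -(bigcup_mkord n (fun a => \big[setU/set0]_(b < n) window_excess a.+1 b.+1)).
exists a.-1; first by rewrite /= /mkset prednK // (leq_trans a_le_b b_le_n).
rewrite -(bigcup_mkord n (fun b => window_excess a.-1.+1 b.+1)).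
by exists b.-1; [rewrite /= /mkset prednK | rewrite !prednK].
Qed.

Lemma window_sums_bounded_prob :
  ((1 - n%:R ^+ 2 * (2 * expR (- L)))%:E <=
    P [set w | window_sums_bounded (Z^~ w) (sigma ^+ 2 * L) n])%E.
Proof.
apply: le_trans (le_measure _ _ _ not_bad_window_sums_bounded); rewrite ?inE; last first.
- exact: measurable_window_sums_bounded.
- exact: measurableC.
rewrite [leRHS](_ : _ = 1 - P bad)%E; last exact: probability_setC.
rewrite -[P bad]fineK ?fin_num_measure // -EFinB lee_fin lerD2l lerN2 -lee_fin.
by rewrite fineK ?fin_num_measure.
Qed.

End union_bound.

End subgaussian_sums.

End independent_sums.

Lemma confidence_log_bounds {R : realType} {n : nat} {delta : R} :
  (0 < n)%N -> 0 < delta -> delta <= 1 ->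
  0 < ln (4 * n%:R ^+ 3 / delta) /\
  n%:R ^+ 2 * (2 * expR (- ln (4 * n%:R ^+ 3 / delta))) <= delta / 2.
Proof.
move=> n_gt0 delta_gt0 delta_le1.
have n3_ge1 : 1 <= (n%:R : R) ^+ 3 by rewrite exprn_ege1 // ler1n.
split; first by apply: ln_gt0; rewrite ltr_pdivlMr // mul1r; lra.
have n_neq0 : (n%:R : R) != 0 by rewrite pnatr_eq0 -lt0n.
have x_gt0 : 0 < 4 * n%:R ^+ 3 / delta.
  by rewrite divr_gt0 // mulr_gt0 // (lt_le_trans ltr01).
rewrite expRN lnK ?posrE // invf_div.
rewrite (_ : _ * _ = delta / 2 / n%:R); last by field.
by rewrite ler_pdivrMr ?ltr0n // ler_peMr ?ler1n // divr_ge0 // ltW.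
Qed.

Section measurability.
Context {d} {T : measurableType d} {R : realType}.
Variables (theta : nat -> R) (Z : nat -> T -> R).
Hypothesis mZ : forall t, measurable_fun setT (Z t).

Let measurable_noisy k : measurable_fun setT (fun w => noisy theta (Z^~ w) k).
Proof.
rewrite /noisy; case: (k == 0%N); first exact: measurable_cst.
by apply: measurable_funD => //; exact: measurable_cst.
Qed.

Let measurable_online_pred_sq_err th tl : measurable_fun setT (fun w =>
  \sum_(th <= t < tl.+1) (online_pred (noisy theta (Z^~ w)) th t - theta t) ^+ 2).
Proof.
apply: measurable_sum => t; apply: measurable_funX.
apply: measurable_funB; last exact: measurable_cst.
rewrite /online_pred; case: (t == th) => //.
rewrite /avg; apply: measurable_funM; last exact: measurable_cst.
by apply: measurable_sum => k.
Qed.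

Lemma measurable_online_pred_sq_err_le (n : nat) (bound : nat -> nat -> R) :
  measurable [set w | forall th tl : nat, (1 <= th)%N -> (th <= tl)%N -> (tl <= n)%N ->
    \sum_(th <= t < tl.+1) (online_pred (noisy theta (Z^~ w)) th t - theta t) ^+ 2
      <= bound th tl].
Proof.
apply: measurable_forall_nat => th; apply: measurable_forall_nat => tl.
do 3 apply: measurable_imply.
apply: measurable_set_le; first exact: measurable_online_pred_sq_err.
exact: measurable_cst.
Qed.

End measurability.

Theorem lemma7 (d : measure_display) (T : measurableType d) (R : realType)
  (P : probability T R) (n : nat) (sigma delta : R)
  (theta : nat -> R) (Z : nat -> T -> R) :
  theta 0%N = 0 ->
  (forall t, measurable_fun setT (Z t)) ->
  mutually_independent P n Z ->
  (forall t, (1 <= t <= n)%N -> ('E_P[Z t] = 0)%E) ->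
  (forall t, (1 <= t <= n)%N -> subgaussian P sigma (Z t)) ->
  0 < delta <= 1 ->
  let y : T -> nat -> R :=
    fun w t => if t == 0%N then 0 else theta t + Z t w in
  (P [set w | forall th tl : nat, (1 <= th)%N -> (th <= tl)%N -> (tl <= n)%N ->
       (\sum_(th <= t < tl.+1) (online_pred (y w) th t - theta t) ^+ 2 <=
       4 * sigma ^+ 2 * ln (4 * n%:R ^+ 3 / delta) * (2 + ln (tl - th + 1)%:R)
       + 2 * (theta th.-1 - theta th) ^+ 2
       + 2 * \sum_(th.+1 <= t < tl.+1) (avg theta th t.-1 - theta t) ^+ 2)%R]
   >= (1 - delta / 2)%:E)%E.
Proof.
(* The zero-mean hypothesis is implied by the subgaussian moment bound. *)
move=> theta0 mZ HZ _ SG /andP[delta_gt0 delta_le1]; cbv zeta.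
have [n0|n_gt0] := posnP n.
  rewrite (_ : [set w | _] = setT) ?probability_setT ?lee_fin; first lra.
  by apply/seteqP; split => // w _ th tl; lia.
have [L_gt0 union_le] := confidence_log_bounds n_gt0 delta_gt0 delta_le1.
set L := ln _ in L_gt0 union_le *.
apply: le_trans (_ : _ <= (1 - n%:R ^+ 2 * (2 * expR (- L)))%:E)%E _.
  by rewrite lee_fin lerD2l lerN2.
apply: le_trans (window_sums_bounded_prob P mZ HZ SG _ L_gt0) _.
apply: le_measure; rewrite ?inE.
- exact: measurable_window_sums_bounded.
- exact: measurable_online_pred_sq_err_le.
move=> w w_bounded th tl th_ge1 th_le_tl tl_le_n.
rewrite -[4 * _ * L]mulrA; apply: (online_pred_sq_err_sum theta0 _ w_bounded) => //.
- exact: mulr_ge0 (sqr_ge0 _) (ltW L_gt0).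
- by rewrite th_le_tl.
Qed.
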